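(* Let $d:\mathbb{R}\to\mathbb{R}$ be a derivation and $\alpha\ge1$. Then the function $F_{d,\alpha}:\mathbb{R}_+\to\mathbb{R}_+$, $F_{d,\alpha}(x)=x^\alpha\exp\big(d(x)/x\big)$, is multiplicative and Jensen convex, i.e. $F_{d,\alpha}\big(\frac{x+y}{2}\big)\le\frac{F_{d,\alpha}(x)+F_{d,\alpha}(y)}{2}$ for all $x,y>0$. Hence, if $d$ is a nonzero derivation, then $F_{d,\alpha}$ is a discontinuous function which is Jensen convex and multiplicative.
   Context: $\mathbb{R}_+=]0,\infty[$. A derivation is a function $d:\mathbb{R}\to\mathbb{R}$ that is additive and satisfies $d(xy)=xd(y)+yd(x)$ for all $x,y\in\mathbb{R}$. A function $m:\mathbb{R}_+\to\mathbb{R}_+$ is multiplicative if $m(xy)=m(x)m(y)$ for all $x,y>0$. *)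

From Stdlib Require Import Reals.
Open Scope R_scope.

Definition is_derivation (d : R -> R) : Prop :=
  (forall x y, d (x + y) = d x + d y) /\
  (forall x y, d (x * y) = x * d y + y * d x).

(* F_{d,alpha}(x) = x^alpha * exp(d(x)/x); only meaningful for x > 0
   (Rpower x a = exp (a * ln x)). *)
Definition F_da (d : R -> R) (alpha : R) (x : R) : R :=
  Rpower x alpha * exp (d x / x).

(** Writing [F x = x * exp (phi x)] with [phi x = (alpha - 1) ln x + d x / x],
    multiplicativity is the Leibniz rule for [d] together with [ln (x y) = ln x + ln y].
    For Jensen convexity, [x * phi x = (alpha - 1) x ln x + d x] is midpoint convex
    ([x ln x] is convex and [d] is additive), so [phi] at the midpoint is at most the
    [x]-weighted mean of [phi x] and [phi y]; convexity of [exp] then finishes.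
    A derivation vanishes on the rationals, which are dense; if [F] were continuous,
    so would be [d x = x (ln (F x) - alpha ln x)] on [R_+], forcing [d = 0] there,
    and [d] is odd. *)

From Stdlib Require Import Reals Lra Lia.
Open Scope R_scope.

Definition rational (q : R) : Prop :=
  exists p k : Z, (0 < k)%Z /\ q = IZR p / IZR k.

Lemma rational_dense_right x delta :
  0 < delta -> exists q, rational q /\ x < q /\ q - x < delta.
Proof.
  intros Hdelta.
  destruct (archimed (/ delta)) as [Hk _].
  set (k := up (/ delta)) in Hk.
  assert (Hk0 : 0 < IZR k) by (pose proof (Rinv_0_lt_compat delta Hdelta); lra).
  destruct (archimed (IZR k * x)) as [Hp1 Hp2].
  exists (IZR (up (IZR k * x)) / IZR k); split; [|split].
  - exists (up (IZR k * x)), k; split; [apply lt_0_IZR|]; auto.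
  - apply Rmult_lt_reg_l with (IZR k); auto.
    replace (IZR k * (IZR (up (IZR k * x)) / IZR k)) with (IZR (up (IZR k * x)))
      by (field; lra).
    lra.
  - assert (Hdk : 1 < delta * IZR k).
    { apply Rmult_lt_reg_l with (/ delta); [apply Rinv_0_lt_compat; auto|].
      rewrite <- Rmult_assoc, Rinv_l, Rmult_1_l, Rmult_1_r by lra. lra. }
    assert (IZR k * (IZR (up (IZR k * x)) / IZR k - x) <= 1)
      by (replace (IZR k * (IZR (up (IZR k * x)) / IZR k - x))
            with (IZR (up (IZR k * x)) - IZR k * x) by (field; lra); lra).
    nra.
Qed.

Lemma continuity_pt_eq0_of_rational_right (g : R -> R) x :
  continuity_pt g x -> (forall q, rational q -> x < q -> g q = 0) -> g x = 0.
Proof.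
  intros Hg Hq.
  destruct (Req_dec (g x) 0) as [|Hgx]; auto; exfalso.
  destruct (Hg (Rabs (g x)) (Rabs_pos_lt _ Hgx)) as [delta [Hdelta Hnear]].
  destruct (rational_dense_right x delta Hdelta) as [q [Hrat [Hxq Hqx]]].
  assert (Hdist : D_x no_cond x q /\ R_dist q x < delta).
  { split; [split; [constructor | lra]|].
    unfold R_dist; rewrite Rabs_right; lra. }
  specialize (Hnear q Hdist); simpl in Hnear; unfold R_dist in Hnear.
  rewrite (Hq q Hrat Hxq), Rminus_0_l, Rabs_Ropp in Hnear. lra.
Qed.

Lemma ln_le_sub1 t : 0 < t -> ln t <= t - 1.
Proof.
  intros Ht. rewrite <- (ln_exp (t - 1)).
  destruct (Rle_lt_or_eq_dec t (exp (t - 1))) as [Hlt|Heq].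
  - pose proof (exp_ineq1_le (t - 1)); lra.
  - left; apply ln_increasing; auto.
  - rewrite <- Heq; lra.
Qed.

Lemma xlnx_midpoint_convex x y : 0 < x -> 0 < y ->
  (x + y) * ln ((x + y) / 2) <= x * ln x + y * ln y.
Proof.
  intros Hx Hy. set (m := (x + y) / 2).
  assert (Hlnx : ln (m / x) <= m / x - 1)
    by (apply ln_le_sub1, Rdiv_lt_0_compat; unfold m; lra).
  assert (Hlny : ln (m / y) <= m / y - 1)
    by (apply ln_le_sub1, Rdiv_lt_0_compat; unfold m; lra).
  unfold Rdiv in Hlnx, Hlny.
  rewrite ln_mult, ln_Rinv in Hlnx, Hlny by (try apply Rinv_0_lt_compat; unfold m; lra).
  apply Rmult_le_compat_l with (r := x) in Hlnx; [|lra].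
  apply Rmult_le_compat_l with (r := y) in Hlny; [|lra].
  replace (x * (m * / x - 1)) with (m - x) in Hlnx by (field; lra).
  replace (y * (m * / y - 1)) with (m - y) in Hlny by (field; lra).
  unfold m in *. lra.
Qed.

Lemma exp_weighted_mean_le x y A B : 0 < x -> 0 < y ->
  (x + y) * exp ((x * A + y * B) / (x + y)) <= x * exp A + y * exp B.
Proof.
  intros Hx Hy. set (c := (x * A + y * B) / (x + y)).
  (* tangent line of [exp] at [c] *)
  assert (Htangent : forall z, exp c * (1 + (z - c)) <= exp z).
  { intro z. replace z with (c + (z - c)) at 2 by ring. rewrite exp_plus.
    apply Rmult_le_compat_l; [left; apply exp_pos | apply exp_ineq1_le]. }
  assert (Hmean : x * (exp c * (1 + (A - c))) + y * (exp c * (1 + (B - c)))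
                  = (x + y) * exp c) by (unfold c; field; lra).
  pose proof (Rmult_le_compat_l x _ _ (Rlt_le _ _ Hx) (Htangent A)).
  pose proof (Rmult_le_compat_l y _ _ (Rlt_le _ _ Hy) (Htangent B)).
  lra.
Qed.

Lemma F_da_pos d alpha x : 0 < F_da d alpha x.
Proof. apply Rmult_lt_0_compat; apply exp_pos. Qed.

Lemma ln_F_da d alpha x : 0 < x -> ln (F_da d alpha x) = alpha * ln x + d x / x.
Proof. intros Hx. unfold F_da, Rpower. rewrite <- exp_plus. apply ln_exp. Qed.

Definition F_da_exponent (d : R -> R) (alpha x : R) : R :=
  (alpha - 1) * ln x + d x / x.

Lemma F_da_exp_exponent d alpha x : 0 < x ->
  F_da d alpha x = x * exp (F_da_exponent d alpha x).
Proof.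
  intros Hx. unfold F_da, F_da_exponent, Rpower.
  replace (alpha * ln x) with (ln x + (alpha - 1) * ln x) by ring.
  rewrite !exp_plus, exp_ln by lra. ring.
Qed.

Section Derivation.

Variable d : R -> R.
Hypothesis d_derivation : is_derivation d.

Let d_add : forall x y, d (x + y) = d x + d y := proj1 d_derivation.
Let d_mul : forall x y, d (x * y) = x * d y + y * d x := proj2 d_derivation.

Lemma derivation0 : d 0 = 0.
Proof. pose proof (d_add 0 0). rewrite Rplus_0_l in H. lra. Qed.

Lemma derivation1 : d 1 = 0.
Proof. pose proof (d_mul 1 1). rewrite Rmult_1_l in H. lra. Qed.

Lemma derivationN x : d (- x) = - d x.
Proof. pose proof (d_add x (- x)). rewrite Rplus_opp_r, derivation0 in H. lra. Qed.

Lemma derivation_midpoint x y : d ((x + y) / 2) = (d x + d y) / 2.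
Proof.
  assert (d (x + y) = d ((x + y) / 2) + d ((x + y) / 2))
    by (rewrite <- d_add; f_equal; field).
  rewrite d_add in H. lra.
Qed.

Lemma derivation_INR n : d (INR n) = 0.
Proof.
  induction n as [|n IHn]; [apply derivation0|].
  rewrite S_INR, d_add, IHn, derivation1. ring.
Qed.

Lemma derivation_IZR z : d (IZR z) = 0.
Proof.
  destruct z as [|p|p]; [apply derivation0| |].
  - rewrite <- Znat.positive_nat_Z, <- INR_IZR_INZ. apply derivation_INR.
  - rewrite <- BinInt.Pos2Z.opp_pos, opp_IZR, derivationN,
      <- Znat.positive_nat_Z, <- INR_IZR_INZ, derivation_INR. ring.
Qed.

Lemma derivation_rational q : rational q -> d q = 0.
Proof.
  intros [p [k [Hk ->]]].
  assert (Hk0 : IZR k <> 0) by (apply not_0_IZR; lia).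
  assert (Hkq : d (IZR p) = d (IZR k * (IZR p / IZR k))) by (f_equal; field; auto).
  rewrite derivation_IZR, d_mul, derivation_IZR in Hkq.
  assert (IZR k * d (IZR p / IZR k) = 0) by lra.
  destruct (Rmult_integral _ _ H); [contradiction | auto].
Qed.

Lemma derivation_eq0_of_pos : (forall x, 0 < x -> d x = 0) -> forall t, d t = 0.
Proof.
  intros Hpos t.
  destruct (Rtotal_order t 0) as [Ht|[Ht|Ht]].
  - rewrite <- (Ropp_involutive t), derivationN, Hpos; lra.
  - rewrite Ht; apply derivation0.
  - auto.
Qed.

Variable alpha : R.

Lemma F_da_mult x y : 0 < x -> 0 < y ->
  F_da d alpha (x * y) = F_da d alpha x * F_da d alpha y.
Proof.
  intros Hx Hy. unfold F_da.
  rewrite <- Rpower_mult_distr, d_mul by auto.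
  replace ((x * d y + y * d x) / (x * y)) with (d x / x + d y / y) by (field; lra).
  rewrite exp_plus. ring.
Qed.

Lemma F_da_exponent_midpoint x y : 1 <= alpha -> 0 < x -> 0 < y ->
  (x + y) * F_da_exponent d alpha ((x + y) / 2)
  <= x * F_da_exponent d alpha x + y * F_da_exponent d alpha y.
Proof.
  intros Halpha Hx Hy. unfold F_da_exponent. rewrite derivation_midpoint.
  pose proof (xlnx_midpoint_convex x y Hx Hy).
  replace ((x + y) * ((alpha - 1) * ln ((x + y) / 2) + (d x + d y) / 2 / ((x + y) / 2)))
    with ((alpha - 1) * ((x + y) * ln ((x + y) / 2)) + (d x + d y)) by (field; lra).
  replace (x * ((alpha - 1) * ln x + d x / x) + y * ((alpha - 1) * ln y + d y / y))
    with ((alpha - 1) * (x * ln x + y * ln y) + (d x + d y)) by (field; lra).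
  apply Rplus_le_compat_r, Rmult_le_compat_l; lra.
Qed.

Lemma F_da_jensen x y : 1 <= alpha -> 0 < x -> 0 < y ->
  F_da d alpha ((x + y) / 2) <= (F_da d alpha x + F_da d alpha y) / 2.
Proof.
  intros Halpha Hx Hy.
  rewrite !F_da_exp_exponent by lra.
  set (A := F_da_exponent d alpha x); set (B := F_da_exponent d alpha y).
  assert (Hexponent : F_da_exponent d alpha ((x + y) / 2) <= (x * A + y * B) / (x + y)).
  { apply Rmult_le_reg_l with (x + y); [lra|].
    replace ((x + y) * ((x * A + y * B) / (x + y))) with (x * A + y * B) by (field; lra).
    apply F_da_exponent_midpoint; auto. }
  assert (Hexp : exp (F_da_exponent d alpha ((x + y) / 2)) <= exp ((x * A + y * B) / (x + y))).
  { destruct Hexponent as [Hlt|Heq]; [left; apply exp_increasing; auto | rewrite Heq; lra]. }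
  pose proof (exp_weighted_mean_le x y A B Hx Hy).
  apply Rmult_le_compat_l with (r := (x + y) / 2) in Hexp; [|lra].
  lra.
Qed.

Lemma derivation_eq0_of_F_da_continuous :
  (forall x, 0 < x -> continuity_pt (F_da d alpha) x) -> forall t, d t = 0.
Proof.
  intros HF. apply derivation_eq0_of_pos. intros x Hx.
  set (g := fun y => y * (ln (F_da d alpha y) - alpha * ln y)).
  assert (Hgd : forall y, 0 < y -> g y = d y)
    by (intros y Hy; unfold g; rewrite ln_F_da by auto; field; lra).
  assert (Hln : continuity_pt ln x)
    by (apply derivable_continuous_pt; exists (/ x); apply derivable_pt_lim_ln; auto).
  assert (Hg : continuity_pt g x).
  { apply (continuity_pt_mult (fun y => y)); [apply derivable_continuous_pt, derivable_pt_id|].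
    apply (continuity_pt_minus (fun y => ln (F_da d alpha y))).
    - apply (continuity_pt_comp (F_da d alpha) ln); [auto|].
      apply derivable_continuous_pt; exists (/ F_da d alpha x).
      apply derivable_pt_lim_ln, F_da_pos.
    - apply (continuity_pt_scal ln); auto. }
  rewrite <- Hgd by auto.
  apply continuity_pt_eq0_of_rational_right; auto.
  intros q Hq Hxq. rewrite Hgd by lra. apply derivation_rational; auto.
Qed.

End Derivation.

Theorem corollary4 (d : R -> R) (alpha : R) :
  is_derivation d -> 1 <= alpha ->
  (* F maps R_+ into R_+ *)
  (forall x, 0 < x -> 0 < F_da d alpha x) /\
  (* multiplicative on R_+ *)
  (forall x y, 0 < x -> 0 < y -> F_da d alpha (x * y) = F_da d alpha x * F_da d alpha y) /\
  (* Jensen convex on R_+ *)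
  (forall x y, 0 < x -> 0 < y ->
     F_da d alpha ((x + y) / 2) <= (F_da d alpha x + F_da d alpha y) / 2) /\
  (* if d is nonzero, F is discontinuous on R_+ *)
  ((exists t, d t <> 0) -> ~ (forall x, 0 < x -> continuity_pt (F_da d alpha) x)).
Proof.
  intros Hd Halpha. split; [|split; [|split]].
  - intros x _. apply F_da_pos.
  - apply F_da_mult; auto.
  - intros x y. apply F_da_jensen; auto.
  - intros [t Ht] HF. exact (Ht (derivation_eq0_of_F_da_continuous d Hd alpha HF t)).
Qed.
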